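(* Let $\mathcal{E}^1,\dots,\mathcal{E}^L$ be $m$-party quantum state ensembles, $\mathcal{E}^l=\{\eta^l_i,\rho^l_i\}_{i=1}^{n_l}$, and let $\vec{x}\in\mathbb{N}_{\vec n}$. Then $p_{\sf L}\big(\bigotimes_{l=1}^L\mathcal{E}^l\big)=\eta_{\vec x}$ if and only if $\eta_{\vec x}\rho_{\vec x}-\eta_{\vec c}\rho_{\vec c}\in\mathbb{SEP}^*$ for all $\vec c\in\mathbb{N}_{\vec n}$. Moreover, in this case $p_{\sf L}\big(\bigotimes_{l=1}^L\mathcal{E}^l\big)=p_{\sf SEP}\big(\bigotimes_{l=1}^L\mathcal{E}^l\big)$ and $p_{\sf L}\big(\bigotimes_{l=1}^L\mathcal{E}^l\big)=\prod_{l=1}^Lp_{\sf L}(\mathcal{E}^l)$.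
   Context: Each ensemble $\mathcal{E}^l$ consists of $m$-party states $\rho^l_i$ on $\mathcal{H}=\bigotimes_{k=1}^m\mathbb{C}^{d_k}$ ($m,d_k\ge2$) with nonzero probabilities $\eta^l_i$ summing to $1$. Let $\mathbb{N}_{n_l}=\{1,\dots,n_l\}$, $\vec n=(n_1,\dots,n_L)$, $\mathbb{N}_{\vec n}=\mathbb{N}_{n_1}\times\cdots\times\mathbb{N}_{n_L}$. For $\vec c=(c_1,\dots,c_L)\in\mathbb{N}_{\vec n}$ set $\eta_{\vec c}=\prod_l\eta^l_{c_l}$ and $\rho_{\vec c}=\bigotimes_l\rho^l_{c_l}$; the sequence ensemble is $\bigotimes_l\mathcal{E}^l=\{\eta_{\vec c},\rho_{\vec c}\}_{\vec c\in\mathbb{N}_{\vec n}}$, viewed as an $m$-party ensemble on $\mathcal{H}^{\otimes L}$ in which party $\mathsf{A}_k$ holds the $k$-th factor $\mathbb{C}^{d_k}$ of every copy (so it is again an $m$-party system with local dimensions $d_k^L$). Separability: an operator is separable if it is a sum of tensor products, over the parties $\mathsf{A}_1,\dots,\mathsf{A}_m$, of positive semidefinite local operators; $\mathbb{SEP}$ denotes these. $\mathbb{SEP}^*$ is the set of Hermitian $E$ with $\operatorname{Tr}(E\sigma)\ge0$ for every separable state $\sigma$ (block-positive operators), with respect to $\mathsf{A}_1,\dots,\mathsf{A}_m$. A measurement is separable if all its elements are separable, LOCC if realizable by local operations and classical communication among $\mathsf{A}_1,\dots,\mathsf{A}_m$. For an ensemble $\{\eta_j,\rho_j\}_j$, $p_{\sf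 G}$, $p_{\sf SEP}$, $p_{\sf L}$ denote the maximum of $\sum_j\eta_j\operatorname{Tr}(\rho_jM_j)$ over all measurements, separable measurements, and LOCC measurements $\{M_j\}_j$ respectively. *)

From HB Require Import structures.
From mathcomp Require Import all_boot all_order all_algebra.
From mathcomp Require Import complex.
From mathcomp Require Import boolp classical_sets reals.

Set Implicit Arguments.
Unset Strict Implicit.
Unset Printing Implicit Defensive.

Import Order.TTheory GRing.Theory Num.Theory.
Local Open Scope ring_scope.
Local Open Scope classical_set_scope.

Section Quantum.
Variable R : realType.
Local Notation C := (R[i]).

(* Operators on a finite-dimensional Hilbert space with orthonormal   *)
(* basis indexed by a finType T: square matrices of size #|T|.        *)
Definition Op (T : finType) := 'M[C]_#|T|.

Definition ent (T : finType) (A : Op T) (x y : T) : C :=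
  A (enum_rank x) (enum_rank y).

Definition opE (T : finType) (f : T -> T -> C) : Op T :=
  \matrix_(i, j) f (enum_val i) (enum_val j).

Definition adj (p q : nat) (A : 'M[C]_(p, q)) : 'M[C]_(q, p) := (map_mx conjc A)^T.

Definition hermitian (p : nat) (A : 'M[C]_p) : Prop := adj A = A.

Definition psd (p : nat) (A : 'M[C]_p) : Prop :=
  hermitian A /\ forall v : 'cV[C]_p, 0 <= ((adj v) *m A *m v) 0 0.

Definition state (p : nat) (A : 'M[C]_p) : Prop := psd A /\ \tr A = 1.

(* m-party systems: party k has local orthonormal basis B k, the      *)
(* global basis is the product {dffun forall k, B k}.                 *)
Definition gbasis (m : nat) (B : 'I_m -> finType) : finType :=
  {dffun forall k : 'I_m, B k}.

Definition MOp (m : nat) (B : 'I_m -> finType) := Op (gbasis B).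

Definition prod_op (m : nat) (B : 'I_m -> finType)
    (A : forall k : 'I_m, Op (B k)) : MOp B :=
  opE (fun x y : gbasis B => \prod_(k < m) ent (A k) (x k) (y k)).

Definition embed (m : nat) (B : 'I_m -> finType) (k : 'I_m)
    (A : Op (B k)) : MOp B :=
  opE (fun x y : gbasis B =>
         ent A (x k) (y k) *
         (\prod_(j < m | j != k) ((x j == y j :> B j)%:R : C))).

Definition separable (m : nat) (B : 'I_m -> finType) (E : MOp B) : Prop :=
  exists (N : nat) (f : 'I_N -> forall k : 'I_m, Op (B k)),
    (forall i k, psd (f i k)) /\
    E = \sum_(i < N) prod_op (f i).

Definition sep_dual (m : nat) (B : 'I_m -> finType) (E : MOp B) : Prop :=
  hermitian E /\
  forall sigma : MOp B, separable sigma -> state sigma ->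
    0 <= \tr (E *m sigma).

Definition povm (m : nat) (B : 'I_m -> finType) (J : finType)
    (M : J -> MOp B) : Prop :=
  (forall j, psd (M j)) /\ \sum_(j : J) M j = 1%:M.

Definition sep_meas (m : nat) (B : 'I_m -> finType) (J : finType)
    (M : J -> MOp B) : Prop :=
  povm M /\ forall j, separable (M j).

(* Finite-round LOCC protocols, described by their leaves: a list of
   pairs (K, j) where K is the product of the (local) Kraus operators
   applied along a branch of the protocol tree and j is the final
   classical output.  At each node some party k (chosen adaptively,
   depending on all previous outcomes) performs a local measurement
   with Kraus operators A_1..A_r (sum A_a^* A_a = I) and broadcasts the
   outcome a; the protocol then continues with a sub-protocol that may
   depend on a. *)
Inductive locc_leaves (m : nat) (B : 'I_m -> finType) (J : finType) :
    seq (MOp B * J) -> Prop :=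
| locc_stop (j : J) : locc_leaves [:: (1%:M, j)]
| locc_round (k : 'I_m) (A : seq (Op (B k))) (ch : seq (seq (MOp B * J))) :
    \sum_(a <- A) adj a *m a = 1%:M ->
    size ch = size A ->
    (forall i, (i < size A)%N -> locc_leaves (nth [::] ch i)) ->
    locc_leaves
      (flatten [seq [seq (p.1 *m embed (snd ach), p.2) | p <- fst ach]
               | ach <- zip ch A]).

Definition locc_meas (m : nat) (B : 'I_m -> finType) (J : finType)
    (M : J -> MOp B) : Prop :=
  exists s : seq (MOp B * J), locc_leaves s /\
    forall j, M j = \sum_(p <- s | p.2 == j) adj p.1 *m p.1.

Definition ensemble (m : nat) (B : 'I_m -> finType) (J : finType)
    (eta : J -> R) (rho : J -> MOp B) : Prop :=
  (forall j, 0 < eta j) /\ \sum_(j : J) eta j = 1 /\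
  (forall j, state (rho j)).

Definition succ (m : nat) (B : 'I_m -> finType) (J : finType)
    (eta : J -> R) (rho : J -> MOp B) (M : J -> MOp B) : R :=
  \sum_(j : J) eta j * complex.Re (\tr (rho j *m M j)).

Definition p_G (m : nat) (B : 'I_m -> finType) (J : finType)
    (eta : J -> R) (rho : J -> MOp B) : R :=
  sup [set p | exists M, povm M /\ p = succ eta rho M].

Definition p_SEP (m : nat) (B : 'I_m -> finType) (J : finType)
    (eta : J -> R) (rho : J -> MOp B) : R :=
  sup [set p | exists M, sep_meas M /\ p = succ eta rho M].

Definition p_L (m : nat) (B : 'I_m -> finType) (J : finType)
    (eta : J -> R) (rho : J -> MOp B) : R :=
  sup [set p | exists M, locc_meas M /\ p = succ eta rho M].

(* Single-copy system (local dimensions d k) and the L-copy system in *)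
(* which party k holds the k-th factor of every copy (local basis     *)
(* 'I_L -> 'I_(d k), i.e. local dimension d_k^L).                      *)
Definition qudits (m : nat) (d : 'I_m -> nat) : 'I_m -> finType :=
  fun k => 'I_(d k).

Definition copies (m : nat) (d : 'I_m -> nat) (L : nat) : 'I_m -> finType :=
  fun k => {ffun 'I_L -> 'I_(d k)}.

Definition seq_index (L : nat) (n : 'I_L -> nat) : finType :=
  {dffun forall l : 'I_L, 'I_(n l)}.

Definition slice (m : nat) (d : 'I_m -> nat) (L : nat)
    (x : gbasis (copies d L)) (l : 'I_L) : gbasis (qudits d) :=
  [ffun k : 'I_m => (x k : {ffun 'I_L -> 'I_(d k)}) l : qudits d k].

Definition seq_eta (L : nat) (n : 'I_L -> nat)
    (eta : forall l : 'I_L, 'I_(n l) -> R) (c : seq_index n) : R :=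
  \prod_(l < L) eta l (c l).

Definition seq_rho (m : nat) (d : 'I_m -> nat) (L : nat) (n : 'I_L -> nat)
    (rho : forall l : 'I_L, 'I_(n l) -> MOp (qudits d)) (c : seq_index n)
    : MOp (copies d L) :=
  opE (fun x y : gbasis (copies d L) =>
         \prod_(l < L) ent (rho l (c l)) (slice x l) (slice y l)).

End Quantum.

(* Write E_c for eta_x rho_x - eta_c rho_c.  If every E_c is block-positive,
   then E_c pairs nonnegatively with every tensor product of positive local
   operators (spectral decomposition, one party at a time); the elements of a
   separable measurement and the Gram operators of the branches of an LOCC
   protocol are sums of such products, so no such measurement beats
   sum_j tr(eta_x rho_x M_j) = eta_x, which guessing x always attains.
   Conversely, if tr(E_c P) < 0 for a product pure state P, the LOCC protocol
   in which the parties successively project onto the local factors of P, and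
   guess c exactly when all of them succeed, has success
   eta_x - tr(E_c P) > eta_x.  Finally a witness for a single ensemble lifts
   to the sequence ensemble by tensoring it with computational basis states
   of positive weight in the other copies, so each E^l satisfies the condition
   and p_L(E^l) = eta^l_{x_l}. *)

From Pilot Require Import Defs.
From HB Require Import structures.
From mathcomp Require Import all_boot all_order all_algebra.
From mathcomp Require Import complex.
From mathcomp Require Import boolp classical_sets reals.
From mathcomp Require Import ring.

Set Implicit Arguments.
Unset Strict Implicit.
Unset Printing Implicit Defensive.

Import Order.TTheory GRing.Theory Num.Theory.
Local Open Scope ring_scope.

Section Entries.
Variable R : realType.
Local Notation C := R[i].
Variable T : finType.
Implicit Types (A B : Op R T) (x y : T).

Lemma sum_enum_rank (F : 'I_#|T| -> C) :
  \sum_(i < #|T|) F i = \sum_(z : T) F (enum_rank z).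
Proof. by rewrite (reindex (@enum_rank T)) //; exact/onW_bij/enum_rank_bij. Qed.

Lemma ent_opE (f : T -> T -> C) x y : ent (opE f) x y = f x y.
Proof. by rewrite /ent /opE mxE !enum_rankK. Qed.

Lemma op_ext A B : (forall x y, ent A x y = ent B x y) -> A = B.
Proof.
move=> eqAB; apply/matrixP=> i j; have := eqAB (enum_val i) (enum_val j).
by rewrite /ent !enum_valK.
Qed.

Lemma ent_mul A B x y : ent (A *m B) x y = \sum_z ent A x z * ent B z y.
Proof. by rewrite /ent mxE sum_enum_rank. Qed.

Lemma mxtrace_ent A : \tr A = \sum_x ent A x x.
Proof. by rewrite /mxtrace sum_enum_rank. Qed.

Lemma ent_adj A x y : ent (adj A) x y = (ent A y x)^*%C.
Proof. by rewrite /ent /adj !mxE. Qed.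

Lemma ent_scale (a : C) A x y : ent (a *: A) x y = a * ent A x y.
Proof. by rewrite /ent mxE. Qed.

Lemma ent_sum (I : Type) (r : seq I) (P : pred I) (F : I -> Op R T) x y :
  ent (\sum_(i <- r | P i) F i) x y = \sum_(i <- r | P i) ent (F i) x y.
Proof. by rewrite /ent summxE. Qed.

Lemma ent1 x y : ent (1%:M : Op R T) x y = (x == y)%:R.
Proof. by rewrite /ent mxE (inj_eq enum_rank_inj). Qed.

Lemma ent0 x y : ent (0 : Op R T) x y = 0.
Proof. by rewrite /ent mxE. Qed.

End Entries.

Section Adjoint.
Variable R : realType.
Local Notation C := R[i].

Lemma adjM p q r (A : 'M[C]_(p, q)) (B : 'M[C]_(q, r)) :
  adj (A *m B) = adj B *m adj A.
Proof. by rewrite /adj map_mxM trmx_mul. Qed.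

Lemma adjK p q (A : 'M[C]_(p, q)) : adj (adj A) = A.
Proof. by apply/matrixP => i j; rewrite /adj !mxE conjcK. Qed.

Lemma adjD p q (A B : 'M[C]_(p, q)) : adj (A + B) = adj A + adj B.
Proof. by apply/matrixP => i j; rewrite /adj !mxE rmorphD. Qed.

Lemma adjN p q (A : 'M[C]_(p, q)) : adj (- A) = - adj A.
Proof. by apply/matrixP => i j; rewrite /adj !mxE rmorphN. Qed.

Lemma adjZ p q (a : C) (A : 'M[C]_(p, q)) : adj (a *: A) = a^*%C *: adj A.
Proof. by apply/matrixP => i j; rewrite /adj !mxE rmorphM. Qed.

Lemma adj1 p : adj (1%:M : 'M[C]_p) = 1%:M.
Proof.
apply/matrixP => i j; rewrite /adj !mxE eq_sym.
by case: (_ == _); rewrite ?conjc1 ?conjc0.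
Qed.

Lemma adj0 p q : adj (0 : 'M[C]_(p, q)) = 0.
Proof. by apply/matrixP => i j; rewrite /adj !mxE conjc0. Qed.

Lemma mxtrace_adj p (A : 'M[C]_p) : \tr (adj A) = (\tr A)^*%C.
Proof. by rewrite /mxtrace rmorph_sum; apply: eq_bigr => i _; rewrite /adj !mxE. Qed.

Lemma hermitian_gap p (a b : R) (A B : 'M[C]_p) : Defs.hermitian A -> Defs.hermitian B ->
  Defs.hermitian ((a%:C)%C *: A - (b%:C)%C *: B).
Proof. by move=> hA hB; rewrite /Defs.hermitian adjD adjN !adjZ hA hB !conjc_real. Qed.

Lemma Im_mxtrace_hermitian_mul p (A B : 'M[C]_p) : Defs.hermitian A -> Defs.hermitian B ->
  complex.Im (\tr (A *m B)) = 0.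
Proof.
move=> hA hB; have : (\tr (A *m B))^*%C = \tr (A *m B).
  by rewrite -mxtrace_adj adjM hA hB mxtrace_mulC.
case: (\tr (A *m B)) => a b /= [] /eqP; rewrite eq_sym -subr_eq0 opprK => /eqP.
by rewrite -mulr2n -mulr_natr => /eqP; rewrite mulf_eq0 pnatr_eq0 orbF => /eqP.
Qed.

Lemma psd_adj_conj p q (H : 'M[C]_p) (a : 'M[C]_(p, q)) :
  psd H -> psd (adj a *m H *m a).
Proof.
move=> [hH pH]; split; first by rewrite /Defs.hermitian !adjM adjK hH mulmxA.
by move=> v; have := pH (a *m v); rewrite adjM !mulmxA.
Qed.

Lemma psd1 p : psd (1%:M : 'M[C]_p).
Proof.
split=> [|v]; first exact: adj1.
rewrite mulmx1 /adj !mxE; apply: sumr_ge0 => i _; rewrite !mxE.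
by rewrite mulrC mulcJ_ge0.
Qed.

Lemma psd0 p : psd (0 : 'M[C]_p).
Proof. by split=> [|v]; [exact: adj0 | rewrite mulmx0 mul0mx mxE]. Qed.

Lemma psdZ p (c : C) (A : 'M[C]_p) : 0 <= c -> psd A -> psd (c *: A).
Proof.
move=> c0 [hA pA]; split=> [|v].
  rewrite /Defs.hermitian adjZ hA; congr (_ *: _).
  by case: c c0 => a b; rewrite lecE /= => /andP [/eqP -> _]; rewrite oppr0.
by rewrite -scalemxAr -scalemxAl mxE mulr_ge0.
Qed.

Lemma psd_diag_ge0 p (A : 'M[C]_p) i : psd A -> 0 <= A i i.
Proof.
move=> [_ pA]; have := pA (delta_mx i 0).
rewrite /adj !mxE (bigD1 i) //= big1 ?addr0; last first.
  by move=> j ji; rewrite !mxE (negbTE ji) /= mulr0.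
rewrite !mxE !eqxx /= mulr1 (bigD1 i) //= big1 ?addr0; last first.
  by move=> j ji; rewrite !mxE (negbTE ji) andFb mulr0n conjc0 mul0r.
by rewrite !mxE !eqxx andbT mulr1n conjc1 mul1r.
Qed.

End Adjoint.

Section Outer.
Variable R : realType.
Local Notation C := R[i].
Variable T : finType.
Implicit Types (w u : T -> C).

Definition outer w : Op R T := opE (fun a b => w a * (w b)^*%C).

Lemma psd_outer w : psd (outer w).
Proof.
pose r : 'rV[C]_#|T| := \row_j (w (enum_val j))^*%C.
have -> : outer w = adj r *m 1%:M *m r.
  apply: op_ext => x y; rewrite ent_opE mulmx1 /ent mxE big_ord1 /adj !mxE.
  by rewrite !enum_rankK conjcK.
exact/psd_adj_conj/psd1.
Qed.

Lemma mxtrace_outer w : \tr (outer w) = \sum_x w x * (w x)^*%C.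
Proof. by rewrite mxtrace_ent; apply: eq_bigr => x _; rewrite ent_opE. Qed.

Lemma mxtrace_outer_ge0 w : 0 <= \tr (outer w).
Proof. by rewrite mxtrace_outer; apply: sumr_ge0 => x _; exact: mulcJ_ge0. Qed.

Lemma mxtrace_outer_eq0 w : \tr (outer w) = 0 -> outer w = 0.
Proof.
rewrite mxtrace_outer => /eqP; rewrite psumr_eq0 => [/allP w0|x _]; last first.
  exact: mulcJ_ge0.
have {}w0 x : w x = 0.
  by have := w0 x (mem_index_enum x); rewrite mulf_eq0 conjc_eq0 orbb => /eqP.
by apply: op_ext => x y; rewrite ent_opE ent0 w0 mul0r.
Qed.

Lemma psd_spectral (A : Op R T) : psd A ->
  exists (lam : 'I_#|T| -> C) (w : 'I_#|T| -> T -> C),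
    (forall a, 0 <= lam a) /\ A = \sum_a lam a *: outer (w a).
Proof.
move=> psdA; have adjE p q (M : 'M[C]_(p, q)) : adj M = map_mx Num.conj M^T.
  by apply/matrixP => i j; rewrite /adj !mxE.
have normalA : A \is normalmx by apply/eqP; rewrite -!adjE psdA.1.
have Aeq := orthomx_spectralP normalA.
set P := spectralmx A in Aeq; set D := spectral_diag A in Aeq.
have unitaryP : P \is unitarymx by exact: spectral_unitarymx.
rewrite invmx_unitary // -adjE in Aeq.
have PP : P *m adj P = 1%:M by rewrite adjE; exact/eqP.
exists (fun a => D 0 a), (fun a x => (P a (enum_rank x))^*%C); split.
  move=> a; have := psd_diag_ge0 a (psd_adj_conj (adj P) psdA).
  by rewrite adjK Aeq !mulmxA PP mul1mx -mulmxA PP mulmx1 mxE eqxx mulr1n.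
apply: op_ext => x y; rewrite ent_sum {1}Aeq /ent mxE; apply: eq_bigr => a _.
rewrite mul_mx_diag [in RHS]mxE /outer /opE !mxE !enum_rankK conjcK.
by rewrite [_ * D 0 a]mulrC -!mulrA.
Qed.

Definition normalize w : T -> C := fun a => (sqrtC (\tr (outer w)))^-1 * w a.

Lemma normalizeP w : \tr (outer w) != 0 ->
  \sum_a normalize w a * (normalize w a)^*%C = 1 /\
  outer (normalize w) = (\tr (outer w))^-1 *: outer w.
Proof.
move=> nz; have n0 := mxtrace_outer_ge0 w.
set n := \tr (outer w) in nz n0 *; set s := (sqrtC n)^-1.
have sJ z : (s * z)^*%C = s * z^*%C.
  by rewrite rmorphM; congr (_ * _); apply: geC0_conj; rewrite invr_ge0 sqrtC_ge0.
have ss : s * s = n^-1 by rewrite -expr2 exprVn sqrtCK.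
have normE a b : normalize w a * (normalize w b)^*%C = n^-1 * (w a * (w b)^*%C).
  by rewrite /normalize -/n -/s sJ -ss -!mulrA; congr (_ * _); rewrite mulrCA.
split; last by apply: op_ext => a b; rewrite ent_scale !ent_opE normE.
by under eq_bigr do rewrite normE; rewrite -mulr_sumr -mxtrace_outer mulVf.
Qed.

Lemma outer_idem u : \sum_a u a * (u a)^*%C = 1 -> outer u *m outer u = outer u.
Proof.
move=> u1; apply: op_ext => a b; rewrite ent_mul ent_opE.
under eq_bigr do rewrite !ent_opE [_ * (u b)^*%C]mulrC mulrACA [_^*%C * _]mulrC.
by rewrite -big_distrr /= u1 mulr1.
Qed.

End Outer.

Section Parties.
Variable R : realType.
Local Notation C := R[i].
Variable m : nat.
Variable B : 'I_m -> finType.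
Implicit Types (f g h : forall k, Op R (B k)) (x y : gbasis B).

Lemma prod_nat_bool (S : comPzSemiRingType) (I : finType) (P : pred I) (b : I -> bool) :
  \prod_(i | P i) ((b i)%:R : S) = ([forall i, P i ==> b i])%:R.
Proof.
case: forallP => [Pb|nPb]; first by apply: big1 => i Pi; have := Pb i; rewrite Pi => /= ->.
have [i0] : exists i, ~~ (P i ==> b i).
  by apply: contrapT => nex; apply: nPb => i; apply/negPn/negP => ?; apply: nex; exists i.
by rewrite negb_imply => /andP [Pi0 /negbTE bi0]; rewrite (bigD1 i0) //= bi0 mul0r.
Qed.

Lemma eq_gbasis x y : (x == y) = [forall k, x k == y k].
Proof. by apply/eqP/forallP => [-> //|xy]; apply/ffunP => k; exact/eqP. Qed.

Lemma ent_prod_op f x y : ent (prod_op f) x y = \prod_(k < m) ent (f k) (x k) (y k).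
Proof. exact: ent_opE. Qed.

Lemma eq_prod_op f g : (forall k, f k = g k) -> prod_op f = prod_op g.
Proof. by move=> fg; apply: op_ext => x y; rewrite !ent_prod_op; under eq_bigr do rewrite fg. Qed.

Lemma ent_prod_op_dfwith f k (A : Op R (B k)) x y :
  ent (prod_op (dfwith f A)) x y =
  ent A (x k) (y k) * \prod_(j < m | j != k) ent (f j) (x j) (y j).
Proof.
rewrite ent_prod_op (bigD1 k) //= dfwith_in; congr (_ * _).
by apply: eq_bigr => j jk; rewrite dfwith_out // eq_sym.
Qed.

Lemma prod_op_dfwith_id f k : prod_op (dfwith f (f k)) = prod_op f.
Proof. by apply: eq_prod_op => j; case: dfwithP. Qed.

Lemma prod_op_dfwith_dfwith f k (A A' : Op R (B k)) :
  prod_op (dfwith (dfwith f A) A') = prod_op (dfwith f A').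
Proof.
by apply: eq_prod_op => j; case: (eqVneq k j) => [<-|kj]; rewrite ?dfwith_in // !dfwith_out.
Qed.

Lemma prod_op1 : prod_op (fun k => 1%:M : Op R (B k)) = 1%:M.
Proof.
apply: op_ext => x y; rewrite ent_prod_op ent1 eq_gbasis.
under eq_bigr do rewrite ent1; exact: prod_nat_bool.
Qed.

Lemma prod_op_eq0 f k : f k = 0 -> prod_op f = 0.
Proof. by move=> fk0; apply: op_ext => x y; rewrite ent_prod_op (bigD1 k) //= fk0 !ent0 mul0r. Qed.

Lemma prod_op_dfwith_sum f k (I : Type) (r : seq I) (c : I -> C) (A : I -> Op R (B k)) :
  prod_op (dfwith f (\sum_(a <- r) c a *: A a)) =
  \sum_(a <- r) c a *: prod_op (dfwith f (A a)).
Proof.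
apply: op_ext => x y; rewrite ent_prod_op_dfwith !ent_sum big_distrl /=.
by apply: eq_bigr => a _; rewrite !ent_scale ent_prod_op_dfwith mulrA.
Qed.

Lemma prod_op_dfwithZ f k (c : C) : prod_op (dfwith f (c *: f k)) = c *: prod_op f.
Proof.
apply: op_ext => x y; rewrite ent_prod_op_dfwith !ent_scale ent_prod_op.
by rewrite [in RHS](bigD1 k) //= mulrA.
Qed.

Lemma embed_prod_op k (A : Op R (B k)) : embed A = prod_op (dfwith (fun j => 1%:M : Op R (B j)) A).
Proof.
apply: op_ext => x y; rewrite ent_prod_op_dfwith /embed ent_opE.
by under [in RHS]eq_bigr do rewrite ent1.
Qed.

Definition set_party y k (t : B k) : gbasis B := finfun (dfwith (fun j => y j) t).

Lemma set_party_in y k (t : B k) : set_party y t k = t.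
Proof. by rewrite ffunE dfwith_in. Qed.

Lemma set_party_out y k (t : B k) j : k != j -> set_party y t j = y j.
Proof. by move=> kj; rewrite ffunE dfwith_out. Qed.

(* Summing out every party but [k] against the Kronecker deltas of [embed]. *)
Lemma sum_delta_off_party (F : gbasis B -> C) y k :
  \sum_z F z * \prod_(j < m | j != k) ((z j == y j)%:R : C) =
  \sum_(t : B k) F (set_party y t).
Proof.
under eq_bigr do rewrite prod_nat_bool.
rewrite (bigID (fun z : gbasis B => [forall j, (j != k) ==> (z j == y j)])) /=.
rewrite [X in _ + X]big1 ?addr0 => [|z /negbTE ->]; last by rewrite mulr0.
under eq_bigr => z -> do rewrite mulr1.
rewrite (reindex_onto (fun t => set_party y t) (fun z : gbasis B => z k)).
  apply: eq_bigl => t; rewrite set_party_in eqxx andbT.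
  by apply/forallP => j; apply/implyP => jk; rewrite set_party_out // eq_sym.
move=> z /forallP zy; apply/ffunP => j; rewrite ffunE.
by case: dfwithP => //= j' kj'; have := zy j'; rewrite eq_sym kj' => /eqP ->.
Qed.

Lemma prod_op_mul_embed h k (a : Op R (B k)) :
  prod_op h *m embed a = prod_op (dfwith h (h k *m a)).
Proof.
apply: op_ext => x y; rewrite ent_mul ent_prod_op_dfwith ent_mul.
under eq_bigr do rewrite /embed ent_opE mulrA.
rewrite (sum_delta_off_party (fun z => ent (prod_op h) x z * ent a (z k) (y k))) /=.
rewrite big_distrl /=; apply: eq_bigr => t _.
rewrite ent_prod_op (bigD1 k) //= set_party_in -!mulrA; congr (_ * _).
rewrite mulrC; congr (_ * _).
by apply: eq_bigr => j jk; rewrite set_party_out // eq_sym.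
Qed.

Lemma embed_mul_prod_op h k (a : Op R (B k)) :
  embed a *m prod_op h = prod_op (dfwith h (a *m h k)).
Proof.
apply: op_ext => x y; rewrite ent_mul ent_prod_op_dfwith ent_mul.
under eq_bigr => z _.
  rewrite /embed ent_opE [ent a _ _ * _]mulrC -mulrA mulrC.
  under eq_bigr do rewrite eq_sym.
  over.
rewrite (sum_delta_off_party (fun z => ent a (x k) (z k) * ent (prod_op h) z y)) /=.
rewrite big_distrl /=; apply: eq_bigr => t _.
rewrite ent_prod_op (bigD1 k) //= set_party_in mulrA; congr (_ * _).
by apply: eq_bigr => j jk; rewrite set_party_out // eq_sym.
Qed.

Lemma embed_adj k (a : Op R (B k)) : adj (embed a) = embed (adj a).
Proof.
apply: op_ext => x y; rewrite ent_adj /embed !ent_opE ent_adj rmorphM rmorph_prod.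
by congr (_ * _); apply: eq_bigr => j _; rewrite rmorph_nat eq_sym.
Qed.

Lemma embed_mul k (a b : Op R (B k)) : embed a *m embed b = embed (a *m b).
Proof.
by rewrite {1}embed_prod_op prod_op_mul_embed dfwith_in prod_op_dfwith_dfwith -embed_prod_op.
Qed.

Lemma embed_sum k (r : seq (Op R (B k))) (F : Op R (B k) -> Op R (B k)) :
  embed (\sum_(a <- r) F a) = \sum_(a <- r) embed (F a).
Proof.
apply: op_ext => x y; rewrite ent_sum /embed !ent_opE ent_sum big_distrl /=.
by apply: eq_bigr => a _; rewrite ent_opE.
Qed.

Lemma embed1 k : embed (1%:M : Op R (B k)) = 1%:M.
Proof. by rewrite embed_prod_op -prod_op1 prod_op_dfwith_id. Qed.

Lemma prod_op_conj_embed h k (a : Op R (B k)) :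
  adj (embed a) *m prod_op h *m embed a = prod_op (dfwith h (adj a *m h k *m a)).
Proof.
by rewrite embed_adj embed_mul_prod_op prod_op_mul_embed dfwith_in prod_op_dfwith_dfwith.
Qed.

End Parties.

Section RealPart.
Variable R : realType.
Local Notation C := R[i].

Lemma ReD (x y : C) : complex.Re (x + y) = complex.Re x + complex.Re y.
Proof. by case: x; case: y. Qed.

Lemma ReN (z : C) : complex.Re (- z) = - complex.Re z.
Proof. by case: z. Qed.

Lemma Re_sum (I : Type) (r : seq I) (P : pred I) (F : I -> C) :
  complex.Re (\sum_(i <- r | P i) F i) = \sum_(i <- r | P i) complex.Re (F i).
Proof. exact: (big_morph _ ReD). Qed.

Lemma mxtrace_sum p (I : Type) (r : seq I) (P : pred I) (F : I -> 'M[C]_p) :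
  \tr (\sum_(i <- r | P i) F i) = \sum_(i <- r | P i) \tr (F i).
Proof. exact: raddf_sum. Qed.

Lemma Re_realM (a : R) (z : C) : complex.Re ((a%:C)%C * z) = a * complex.Re z.
Proof. by case: z => u v /=; rewrite mul0r subr0. Qed.

Lemma Re_ge0M (c z : C) : 0 <= c -> complex.Re (c * z) = complex.Re c * complex.Re z.
Proof. by case: c => a b; rewrite lecE /= => /andP [/eqP -> _]; rewrite -Re_realM. Qed.

Lemma Re_ge0 (z : C) : 0 <= z -> 0 <= complex.Re z.
Proof. by rewrite lecE => /andP []. Qed.

End RealPart.

Section Locc.
Variable R : realType.
Variable m : nat.
Variable B : 'I_m -> finType.
Variable J : finType.

Lemma locc_leaves_sum1 (s : seq (MOp R B * J)) :
  locc_leaves s -> \sum_(p <- s) adj p.1 *m p.1 = 1%:M.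
Proof.
elim=> [j | k A ch sumA size_ch _ IH]; first by rewrite big_seq1 /= adj1 mulmx1.
rewrite big_flatten /= big_map (big_nth ([::], 0)) size_zip size_ch minnn big_mkord.
transitivity (\sum_(i < size A) adj (embed (nth 0 A i)) *m embed (nth 0 A i)).
  apply: eq_bigr => i _; rewrite nth_zip ?size_ch //= big_map.
  under eq_bigr do rewrite /= adjM -mulmxA (mulmxA (adj _.1)).
  by rewrite -mulmx_sumr -mulmx_suml IH // mul1mx.
rewrite -(big_mkord xpredT (fun i => adj (embed (nth 0 A i)) *m embed (nth 0 A i))).
rewrite -(big_nth 0 xpredT (fun a => adj (embed a) *m embed a)).
by under eq_bigr do rewrite embed_adj embed_mul; rewrite -embed_sum sumA embed1.
Qed.

(* Each leaf applies local Kraus operators only, so its Gram operator stays a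
   tensor product of local positive operators. *)
Lemma locc_leaves_gram_prod (s : seq (MOp R B * J)) : locc_leaves s ->
  forall p, p \in s -> exists h : forall k, Op R (B k),
    (forall k, psd (h k)) /\ adj p.1 *m p.1 = prod_op h.
Proof.
elim=> [j | k A ch _ size_ch _ IH] p.
  rewrite inE => /eqP -> /=; exists (fun k => 1%:M); split=> [k|]; first exact: psd1.
  by rewrite adj1 mulmx1 prod_op1.
move=> /flattenP [_ /mapP [ach ach_in ->]] /mapP [q q_in ->] /=.
have [i i_lt ach_i] := nthP ([::], 0) ach_in.
move: i_lt q_in; rewrite size_zip size_ch minnn => i_lt.
rewrite -ach_i nth_zip ?size_ch //= => q_in.
have [h [psd_h gram_q]] := IH i i_lt q q_in.
exists (dfwith h (adj (nth 0 A i) *m h k *m nth 0 A i)); split.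
  by move=> j; case: dfwithP => [|j' _]; [exact: psd_adj_conj | exact: psd_h].
by rewrite adjM -mulmxA (mulmxA (adj q.1)) gram_q mulmxA prod_op_conj_embed.
Qed.

Lemma locc_leaves_sum_labels (s : seq (MOp R B * J)) : locc_leaves s ->
  \sum_j \sum_(p <- s | p.2 == j) adj p.1 *m p.1 = 1%:M.
Proof.
move=> leaves_s; rewrite -(locc_leaves_sum1 leaves_s) (exchange_big_dep xpredT) //=.
by apply: eq_bigr => p _; rewrite (big_pred1 p.2) // => j; rewrite eq_sym.
Qed.

End Locc.

Section BlockPositive.
Variable R : realType.
Local Notation C := R[i].
Variable m : nat.
Variable B : 'I_m -> finType.
Implicit Types (E : MOp R B) (W : forall k, B k -> C).

Definition pure_prod W : MOp R B := prod_op (fun k => outer (W k)).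

Lemma pure_prod_outer W : pure_prod W = outer (fun X : gbasis B => \prod_k W k (X k)).
Proof.
apply: op_ext => x y; rewrite ent_prod_op ent_opE rmorph_prod -big_split /=.
by apply: eq_bigr => k _; rewrite ent_opE.
Qed.

(* Normalising the product state requires a party to absorb the scalar. *)
Lemma sep_dual_pure_prod_ge0 E (k0 : 'I_m) W :
  sep_dual E -> 0 <= \tr (E *m pure_prod W).
Proof.
move=> [_ sepE]; have psdW : psd (pure_prod W) by rewrite pure_prod_outer; exact: psd_outer.
have t_ge0 : 0 <= \tr (pure_prod W) by rewrite pure_prod_outer mxtrace_outer_ge0.
have [|t_neq0] := eqVneq (\tr (pure_prod W)) 0.
  by rewrite pure_prod_outer => /mxtrace_outer_eq0 ->; rewrite mulmx0 mxtrace0.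
set t := \tr (pure_prod W) in t_ge0 t_neq0 *.
have invt_ge0 : 0 <= t^-1 by rewrite invr_ge0.
have : 0 <= \tr (E *m (t^-1 *: pure_prod W)).
  apply: sepE; last by split; [exact: psdZ | rewrite mxtraceZ mulVf].
  exists 1%N, (fun _ => dfwith (fun k => outer (W k)) (t^-1 *: outer (W k0))).
  split; last by rewrite big_ord1 prod_op_dfwithZ.
  by move=> _ k; case: dfwithP => [|j _]; [exact/psdZ/psd_outer | exact: psd_outer].
by rewrite -scalemxAr mxtraceZ pmulr_rge0 // invr_gt0 lt_def t_neq0.
Qed.

Lemma Re_mxtrace_prod_op_ge0 E (f : forall k, Op R (B k)) :
  (forall W, 0 <= complex.Re (\tr (E *m pure_prod W))) ->
  (forall k, psd (f k)) -> 0 <= complex.Re (\tr (E *m prod_op f)).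
Proof.
move=> E_pure; suff E_mixed : forall (S : seq 'I_m) W (g : forall k, Op R (B k)),
    (forall k, psd (g k)) -> (forall k, k \notin S -> g k = outer (W k)) ->
    0 <= complex.Re (\tr (E *m prod_op g)).
  by move=> psd_f; apply: (E_mixed (enum 'I_m) (fun k _ => 0)) => // k; rewrite mem_enum.
elim=> [|k S IH] W g psd_g g_pure.
  rewrite (@eq_prod_op _ _ _ g (fun k => outer (W k))) => [|k]; first exact: E_pure.
  exact: g_pure.
have [lam [w [lam_ge0 gk]]] := psd_spectral (psd_g k).
rewrite -(prod_op_dfwith_id g k) gk prod_op_dfwith_sum mulmx_sumr mxtrace_sum Re_sum.
apply: sumr_ge0 => a _; rewrite -scalemxAr mxtraceZ Re_ge0M //.
apply: mulr_ge0; first exact: Re_ge0.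
apply: (IH (dfwith W (w a))) => [j|j jS].
  by case: dfwithP => [|j' _]; [exact: psd_outer | exact: psd_g].
case: (eqVneq k j) => [<-|kj]; rewrite ?dfwith_in ?dfwith_out //.
by apply: g_pure; rewrite inE negb_or eq_sym kj.
Qed.

Lemma sep_dual_prod_op_ge0 E (k0 : 'I_m) (f : forall k, Op R (B k)) :
  sep_dual E -> (forall k, psd (f k)) -> 0 <= complex.Re (\tr (E *m prod_op f)).
Proof.
by move=> sdE; apply: Re_mxtrace_prod_op_ge0 => W; exact/Re_ge0/sep_dual_pure_prod_ge0.
Qed.

Lemma pure_prod_sep_dual E : Defs.hermitian E ->
  (forall W, 0 <= complex.Re (\tr (E *m pure_prod W))) -> sep_dual E.
Proof.
move=> hE E_pure; split=> // S [N [f [psd_f ->]]] [psd_S _].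
rewrite lecE Im_mxtrace_hermitian_mul //; last exact: psd_S.1.
rewrite eqxx /= mulmx_sumr mxtrace_sum Re_sum sumr_ge0 // => i _.
exact: Re_mxtrace_prod_op_ge0.
Qed.

End BlockPositive.

Lemma sup_eq_max (R : realType) (S : set R) (x0 : R) :
  S x0 -> (forall y, S y -> y <= x0) -> sup S = x0.
Proof.
move=> Sx0 ub; apply: le_anti; rewrite ge_sup //=; last by exists x0.
by apply: sup_upper_bound => //; split; exists x0.
Qed.

Section Discrimination.
Variable R : realType.
Variable m : nat.
Variable B : 'I_m -> finType.
Variable J : finType.
Variables (eta : J -> R) (rho : J -> MOp R B).

Lemma succ_le_p_L (M : J -> MOp R B) :
  0 < p_L eta rho -> locc_meas M -> succ eta rho M <= p_L eta rho.
Proof.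
move=> pL_gt0 locc_M; apply: sup_upper_bound; last by exists M.
by apply: contrapT => no_sup; move: pL_gt0; rewrite /p_L sup_out // ltxx.
Qed.

Variable x : J.

Definition gap_op (c : J) : MOp R B := ((eta x)%:C *: rho x - (eta c)%:C *: rho c)%C.

Lemma Re_mxtrace_gap_op c (M : MOp R B) : complex.Re (\tr (gap_op c *m M)) =
  eta x * complex.Re (\tr (rho x *m M)) - eta c * complex.Re (\tr (rho c *m M)).
Proof.
rewrite /gap_op mulmxBl mxtraceD ReD -scalemxAl mxtraceZ Re_realM.
by rewrite -mulNmx -scaleNr -scalemxAl mxtraceZ -rmorphN Re_realM mulNr.
Qed.

Lemma succ_le_of_gap_ge0 (M : J -> MOp R B) : \tr (rho x) = 1 -> \sum_j M j = 1%:M ->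
  (forall j, 0 <= complex.Re (\tr (gap_op j *m M j))) -> succ eta rho M <= eta x.
Proof.
move=> tr_x sumM gap_ge0; rewrite /succ.
apply: (@le_trans _ _ (\sum_j eta x * complex.Re (\tr (rho x *m M j)))).
  by apply: ler_sum => j _; have := gap_ge0 j; rewrite Re_mxtrace_gap_op subr_ge0.
by rewrite -mulr_sumr -Re_sum -mxtrace_sum -mulmx_sumr sumM mulmx1 tr_x mulr1.
Qed.

Definition guess_x (j : J) : MOp R B := if j == x then 1%:M else 0.

Lemma succ_guess_x : \tr (rho x) = 1 -> succ eta rho guess_x = eta x.
Proof.
move=> tr_x; rewrite /succ (bigD1 x) //= big1 ?addr0 => [|j /negbTE jx].
  by rewrite /guess_x eqxx mulmx1 tr_x mulr1.
by rewrite /guess_x jx mulmx0 mxtrace0 mulr0.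
Qed.

Lemma locc_guess_x : locc_meas guess_x.
Proof.
exists [:: (1%:M, x)]; split=> [|j]; first exact: locc_stop.
by rewrite big_cons big_nil /= /guess_x eq_sym; case: (j == x); rewrite ?addr0 // adj1 mulmx1.
Qed.

Lemma sep_meas_guess_x : sep_meas guess_x.
Proof.
split; first split=> [j|].
- by rewrite /guess_x; case: (j == x); [exact: psd1 | exact: psd0].
- by rewrite (bigD1 x) //= big1 ?addr0 /guess_x ?eqxx // => j /negbTE ->.
move=> j; rewrite /guess_x; case: (j == x).
  exists 1%N, (fun _ k => 1%:M); split=> [_ k|]; first exact: psd1.
  by rewrite big_ord1 prod_op1.
by exists 0%N, (fun _ k => 1%:M); split=> [[]|]; rewrite ?big_ord0.
Qed.

Lemma p_L_eq_of_sep_dual_gap (k0 : 'I_m) : \tr (rho x) = 1 ->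
  (forall c, sep_dual (gap_op c)) -> p_L eta rho = eta x.
Proof.
move=> tr_x sd_gap; apply: sup_eq_max.
  by exists guess_x; split; [exact: locc_guess_x | rewrite succ_guess_x].
move=> _ [M [[s [leaves_s ME]] ->]]; apply: succ_le_of_gap_ge0 => // [|j].
  by rewrite -(locc_leaves_sum_labels leaves_s); apply: eq_bigr => j _; rewrite ME.
rewrite ME mulmx_sumr mxtrace_sum Re_sum big_seq_cond sumr_ge0 // => p /andP [ps _].
have [h [psd_h ->]] := locc_leaves_gram_prod leaves_s ps.
exact: sep_dual_prod_op_ge0.
Qed.

Lemma p_SEP_eq_of_sep_dual_gap (k0 : 'I_m) : \tr (rho x) = 1 ->
  (forall c, sep_dual (gap_op c)) -> p_SEP eta rho = eta x.
Proof.
move=> tr_x sd_gap; apply: sup_eq_max.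
  by exists guess_x; split; [exact: sep_meas_guess_x | rewrite succ_guess_x].
move=> _ [M [[[_ sumM] sepM] ->]]; apply: succ_le_of_gap_ge0 => // j.
have [N [f [psd_f ->]]] := sepM j.
rewrite mulmx_sumr mxtrace_sum Re_sum sumr_ge0 // => i _.
exact: sep_dual_prod_op_ge0.
Qed.

End Discrimination.

Section ProjectionChain.
Variable R : realType.
Variable m : nat.
Variable B : 'I_m -> finType.
Variable J : finType.
Variables (x c : J) (Pi : forall k, Op R (B k)).
Hypotheses (Pi_herm : forall k, adj (Pi k) = Pi k)
           (Pi_idem : forall k, Pi k *m Pi k = Pi k).

(* The parties in [ks] measure {Pi k, 1 - Pi k} in turn: the first failure
   stops the protocol with output [x], success throughout outputs [c]. *)
Fixpoint proj_chain (ks : seq 'I_m) : seq (MOp R B * J) :=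
  match ks with
  | [::] => [:: (1%:M, c)]
  | k :: ks' => flatten [seq [seq (p.1 *m embed ach.2, p.2) | p <- ach.1]
                        | ach <- zip [:: proj_chain ks'; [:: (1%:M, x)]]
                                     [:: Pi k; 1%:M - Pi k]]
  end.

Lemma proj_chain_locc ks : locc_leaves (proj_chain ks).
Proof.
elim: ks => [|k ks IH]; first exact: locc_stop.
apply: locc_round => //; last by case=> [|[|]] //= _; exact: locc_stop.
rewrite big_cons big_cons big_nil addr0 adjD adjN adj1 Pi_herm Pi_idem.
by rewrite mulmxBl mul1mx mulmxBr mulmx1 Pi_idem subrr subr0 addrC subrK.
Qed.

Definition proj_chain_meas ks (j : J) : MOp R B :=
  \sum_(p <- proj_chain ks | p.2 == j) adj p.1 *m p.1.

Lemma proj_chain_meas_cons k ks j : x != j ->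
  proj_chain_meas (k :: ks) j = adj (embed (Pi k)) *m proj_chain_meas ks j *m embed (Pi k).
Proof.
move=> /negbTE xj; rewrite /proj_chain_meas /= big_cat big_map /= big_cons /= xj.
rewrite big_nil addr0 mulmx_sumr mulmx_suml; apply: eq_bigr => p _.
by rewrite adjM !mulmxA.
Qed.

Lemma proj_chain_meas_c ks : c != x -> uniq ks ->
  proj_chain_meas ks c = prod_op (fun j => if j \in ks then Pi j else 1%:M).
Proof.
move=> cx; elim: ks => [_ |k ks IH].
  rewrite /proj_chain_meas /= big_cons eqxx big_nil addr0 adj1 mulmx1 -prod_op1.
  exact: eq_prod_op.
rewrite cons_uniq => /andP [kks uks].
rewrite proj_chain_meas_cons ?(eq_sym x) // IH // prod_op_conj_embed (negbTE kks).
rewrite mulmx1 Pi_herm Pi_idem; apply: eq_prod_op => j.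
by case: dfwithP => [|j' kj]; rewrite inE ?eqxx // eq_sym (negbTE kj).
Qed.

Lemma proj_chain_meas_other ks j : j != x -> j != c -> proj_chain_meas ks j = 0.
Proof.
move=> jx jc; elim: ks => [|k ks IH].
  by rewrite /proj_chain_meas /= big_cons eq_sym (negbTE jc) big_nil.
by rewrite proj_chain_meas_cons 1?eq_sym // IH mulmx0 mul0mx.
Qed.

Lemma succ_proj_chain (eta : J -> R) (rho : J -> MOp R B) : c != x -> \tr (rho x) = 1 ->
  succ eta rho (proj_chain_meas (enum 'I_m)) =
  eta x - complex.Re (\tr (gap_op eta rho x c *m prod_op Pi)).
Proof.
move=> cx tr_x; set M := proj_chain_meas _.
have Mc : M c = prod_op Pi.
  by rewrite /M proj_chain_meas_c ?enum_uniq //; apply: eq_prod_op => j; rewrite mem_enum.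
have Mx : M x = 1%:M - M c.
  have sumM : \sum_j M j = 1%:M := locc_leaves_sum_labels (proj_chain_locc _).
  rewrite -sumM (bigD1 x) //= (bigD1 c) //= big1 ?addr0 ?addrK // => j /andP [jx jc].
  by rewrite /M proj_chain_meas_other.
rewrite /succ (bigD1 x) //= (bigD1 c) //= big1 ?addr0 => [|j /andP [jx jc]]; last first.
  by rewrite /M proj_chain_meas_other // mulmx0 mxtrace0 mulr0.
rewrite Re_mxtrace_gap_op Mx Mc mulmxBr mulmx1 mxtraceD ReD tr_x raddfN ReN /=.
ring.
Qed.

End ProjectionChain.

Section Necessity.
Variable R : realType.
Local Notation C := R[i].
Variable m : nat.
Variable B : 'I_m -> finType.
Variable J : finType.
Variables (eta : J -> R) (rho : J -> MOp R B) (x : J).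

Lemma pure_prod_normalize (W : forall k, B k -> C) :
  (forall k, \tr (outer (W k)) != 0) ->
  pure_prod W = (\prod_k \tr (outer (W k))) *: pure_prod (fun k => normalize (W k)).
Proof.
move=> W_neq0; apply: op_ext => X Y; rewrite ent_scale !ent_prod_op -big_split /=.
apply: eq_bigr => k _; rewrite (normalizeP (W_neq0 k)).2 ent_scale.
by rewrite mulrA mulfV ?mul1r.
Qed.

(* If some party's local vector vanishes the product state is zero; otherwise
   normalise it and let the parties project onto it one after the other. *)
Lemma sep_dual_gap_of_p_L_eq : 0 < eta x -> \tr (rho x) = 1 ->
  (forall j, Defs.hermitian (rho j)) -> p_L eta rho = eta x ->
  forall c, sep_dual (gap_op eta rho x c).
Proof.
move=> eta_x_gt0 tr_x herm_rho pL_x c.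
have [->|cx] := eqVneq c x.
  rewrite /gap_op subrr; split=> [|S _ _]; first exact: adj0.
  by rewrite mul0mx mxtrace0.
apply: pure_prod_sep_dual; first exact: hermitian_gap.
move=> W; have [[k /mxtrace_outer_eq0 Wk0]|W_neq0] :=
  pselect (exists k, \tr (outer (W k)) = 0).
  by rewrite /pure_prod (prod_op_eq0 Wk0) mulmx0 mxtrace0.
have {}W_neq0 k : \tr (outer (W k)) != 0 by apply/eqP => Wk0; apply: W_neq0; exists k.
pose Pi k := outer (normalize (W k)).
have Pi_herm k : adj (Pi k) = Pi k by exact: (psd_outer _).1.
have Pi_idem k : Pi k *m Pi k = Pi k by exact/outer_idem/(normalizeP (W_neq0 k)).1.
have : succ eta rho (proj_chain_meas x c Pi (enum 'I_m)) <= p_L eta rho.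
  apply: succ_le_p_L; first by rewrite pL_x.
  by exists (proj_chain x c Pi (enum 'I_m)); split; first exact: proj_chain_locc.
rewrite (succ_proj_chain Pi_herm Pi_idem) // pL_x gerBl => gap_Pi_ge0.
rewrite pure_prod_normalize // -scalemxAr mxtraceZ Re_ge0M ?mulr_ge0 //.
  by apply/Re_ge0/prodr_ge0 => k _; exact: mxtrace_outer_ge0.
by apply: prodr_ge0 => k _; exact: mxtrace_outer_ge0.
Qed.

End Necessity.

Section Copies.
Variable R : realType.
Local Notation C := R[i].
Variable m : nat.
Variable d : 'I_m -> nat.
Variable L : nat.
Local Notation Q := (gbasis (qudits d)).
Local Notation G := (gbasis (copies d L)).

Definition copies_op (tau : 'I_L -> MOp R (qudits d)) : MOp R (copies d L) :=
  opE (fun X Y : G => \prod_(l < L) ent (tau l) (slice X l) (slice Y l)).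

Definition unslice (a : {ffun 'I_L -> Q}) : G :=
  finfun (fun k => ([ffun l => a l k] : {ffun 'I_L -> 'I_(d k)})).

Lemma sliceK (X : G) : unslice [ffun l => slice X l] = X.
Proof. by apply/ffunP => k; rewrite ffunE; apply/ffunP => l; rewrite !ffunE. Qed.

Lemma unsliceK (a : {ffun 'I_L -> Q}) : [ffun l => slice (unslice a) l] = a.
Proof. by apply/ffunP => l; rewrite ffunE; apply/ffunP => k; rewrite /slice !ffunE. Qed.

Lemma sum_copies (F : 'I_L -> Q -> C) :
  \sum_(X : G) \prod_l F l (slice X l) = \prod_l \sum_(a : Q) F l a.
Proof.
rewrite bigA_distr_bigA /= (reindex unslice); last first.
  by exists (fun X => [ffun l => slice X l]) => a _; [exact: unsliceK | exact: sliceK].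
apply: eq_bigr => a _; apply: eq_bigr => l _.
by have /(congr1 (fun g : {ffun 'I_L -> Q} => g l)) := unsliceK a; rewrite ffunE => ->.
Qed.

Lemma mxtrace_copies_op_mul (tau tau' : 'I_L -> MOp R (qudits d)) :
  \tr (copies_op tau *m copies_op tau') = \prod_l \tr (tau l *m tau' l).
Proof.
rewrite (@mxtrace_ent _ G).
under [LHS]eq_bigr => X _.
  rewrite ent_mul; under eq_bigr do rewrite !ent_opE -big_split /=.
  rewrite (sum_copies (fun l b => ent (tau l) (slice X l) b * ent (tau' l) b (slice X l))).
  over.
rewrite (sum_copies (fun l a => \sum_b ent (tau l) a b * ent (tau' l) b a)).
by apply: eq_bigr => l _; rewrite mxtrace_ent; apply: eq_bigr => a _; rewrite ent_mul.
Qed.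

Lemma mxtrace_copies_op (tau : 'I_L -> MOp R (qudits d)) :
  \tr (copies_op tau) = \prod_l \tr (tau l).
Proof.
rewrite (@mxtrace_ent _ G); under [LHS]eq_bigr do rewrite ent_opE.
by rewrite (sum_copies (fun l a => ent (tau l) a a)); under [RHS]eq_bigr do rewrite mxtrace_ent.
Qed.

Lemma hermitian_copies_op (tau : 'I_L -> MOp R (qudits d)) :
  (forall l, Defs.hermitian (tau l)) -> Defs.hermitian (copies_op tau).
Proof.
move=> herm_tau; apply: op_ext => X Y; rewrite ent_adj !ent_opE rmorph_prod.
apply: eq_bigr => l _; rewrite -{2}(herm_tau l).
by rewrite ent_adj.
Qed.

Lemma pure_prod_copies (V : 'I_L -> forall k, qudits d k -> C) :
  pure_prod (fun k (a : copies d L k) => \prod_l V l k (a l)) =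
  copies_op (fun l => pure_prod (V l)).
Proof.
apply: op_ext => X Y; rewrite pure_prod_outer !ent_opE.
under [RHS]eq_bigr do rewrite pure_prod_outer ent_opE.
rewrite !rmorph_prod big_split /=.
under [X in _ * X = _]eq_bigr do rewrite rmorph_prod.
under [X in _ = _ * X]eq_bigr do rewrite rmorph_prod.
rewrite [X in X * _ = _]exchange_big [X in _ * X = _]exchange_big /=.
by congr (_ * _); apply: eq_bigr => l _; apply: eq_bigr => k _; rewrite /slice ffunE.
Qed.

End Copies.

Lemma state_diag_gt0 (R : realType) (T : finType) (A : Op R T) :
  state A -> exists y, 0 < ent A y y.
Proof.
move=> [psdA trA]; apply: contrapT => no_pos.
have A0 y : ent A y y = 0.
  have := psd_diag_ge0 (enum_rank y) psdA; rewrite le_eqVlt => /orP [/eqP/esym //|pos].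
  by case: no_pos; exists y.
by move: trA; rewrite mxtrace_ent big1 // => /esym/eqP; rewrite oner_eq0.
Qed.

Lemma mxtrace_pure_prod_delta (R : realType) (m : nat) (B : 'I_m -> finType)
    (A : MOp R B) (y : gbasis B) :
  \tr (A *m pure_prod (fun k (a : B k) => ((a == y k)%:R : R[i]))) = ent A y y.
Proof.
have deltaE (X : gbasis B) : \prod_k ((X k == y k)%:R : R[i]) = (X == y)%:R.
  by rewrite eq_gbasis; exact: prod_nat_bool.
rewrite pure_prod_outer mxtrace_ent (bigD1 y) //= big1 ?addr0 => [|X /negbTE Xy].
  rewrite ent_mul (bigD1 y) //= big1 ?addr0 => [|Z /negbTE Zy].
    by rewrite ent_opE deltaE eqxx conjc1 !mulr1.
  by rewrite ent_opE deltaE Zy mul0r mulr0.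
by rewrite ent_mul big1 // => Z _; rewrite ent_opE deltaE deltaE Xy conjc0 !mulr0.
Qed.

Section SequenceEnsemble.
Variable R : realType.
Local Notation C := R[i].
Variable m : nat.
Variable d : 'I_m -> nat.
Variable L : nat.
Variable n : 'I_L -> nat.
(* Keep [l] explicit in [rho l (c l)]. *)
Unset Implicit Arguments.
Variable eta : forall l, 'I_(n l) -> R.
Variable rho : forall l, 'I_(n l) -> MOp R (qudits d).
Set Implicit Arguments.
Variable x : seq_index n.

Lemma seq_rhoE (c : seq_index n) : seq_rho rho c = copies_op (fun l : 'I_L => rho l (c l)).
Proof. by []. Qed.

Lemma mxtrace_gap_seq_copies (l : 'I_L) (c : seq_index n)
    (tau : 'I_L -> MOp R (qudits d)) : (forall l', l' != l -> c l' = x l') ->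
  \tr (gap_op (seq_eta eta) (seq_rho rho) x c *m copies_op tau) =
  (\prod_(l' < L | l' != l) ((eta l' (x l'))%:C * \tr (rho l' (x l') *m tau l'))%C) *
  \tr (gap_op (eta l) (rho l) (x l) (c l) *m tau l).
Proof.
move=> cx; have prodD1 (F : 'I_L -> C) : \prod_i F i = F l * \prod_(i | i != l) F i.
  exact: bigD1.
rewrite /gap_op !mulmxBl !raddfB /= -!scalemxAl !mxtraceZ !seq_rhoE.
rewrite !mxtrace_copies_op_mul /seq_eta !rmorph_prod !prodD1 big_split /=.
have offE (F : forall i, 'I_(n i) -> C) :
    \prod_(i | i != l) F i (c i) = \prod_(i | i != l) F i (x i).
  by apply: eq_bigr => i /cx ->.
rewrite (offE (fun i j => (eta i j)%:C%C)) (offE (fun i j => \tr (rho i j *m tau i))).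
ring.
Qed.

Lemma sep_dual_gap_copy (k0 : 'I_m) : (forall l, ensemble (eta l) (rho l)) ->
  (forall c, sep_dual (gap_op (seq_eta eta) (seq_rho rho) x c)) ->
  forall l (c' : 'I_(n l)), sep_dual (gap_op (eta l) (rho l) (x l) c').
Proof.
move=> ens sd l c'.
have herm_rho l' j : Defs.hermitian (rho l' j) by exact: ((ens l').2.2 j).1.1.
apply: pure_prod_sep_dual => [|W]; first exact: hermitian_gap.
have [y y_pos] := choice (fun l' => state_diag_gt0 ((ens l').2.2 (x l'))).
pose V l' := if l' == l then W else fun k (a : qudits d k) => ((a == y l' k)%:R : C).
pose c : seq_index n := finfun (dfwith (fun l0 => x l0) c').
have cx l' : l' != l -> c l' = x l' by move=> l'l; rewrite ffunE dfwith_out // eq_sym.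
have := sep_dual_pure_prod_ge0 k0 (fun k (a : copies d L k) => \prod_l' V l' k (a l')) (sd c).
rewrite pure_prod_copies (mxtrace_gap_seq_copies _ cx) ffunE dfwith_in /V eqxx.
rewrite pmulr_rge0 => [|]; first exact: Re_ge0.
apply: prodr_gt0 => l' l'l; rewrite (negbTE l'l) mxtrace_pure_prod_delta.
by apply: mulr_gt0; [rewrite ltcR; exact: (ens l').1 | exact: y_pos].
Qed.

End SequenceEnsemble.

Theorem theorem2 (R : realType) (m : nat) (d : 'I_m -> nat)
    (L : nat) (n : 'I_L -> nat)
    (eta : forall l : 'I_L, 'I_(n l) -> R)
    (rho : forall l : 'I_L, 'I_(n l) -> MOp R (qudits d))
    (x : seq_index n) :
  (2 <= m)%N -> (forall k, 2 <= d k)%N -> (0 < L)%N ->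
  (forall l, ensemble (eta l) (rho l)) ->
  (p_L (seq_eta eta) (seq_rho rho) = seq_eta eta x <->
     forall c : seq_index n,
       sep_dual (((seq_eta eta x)%:C)%C *: seq_rho rho x
                 - ((seq_eta eta c)%:C)%C *: seq_rho rho c)) /\
  (p_L (seq_eta eta) (seq_rho rho) = seq_eta eta x ->
     p_L (seq_eta eta) (seq_rho rho) = p_SEP (seq_eta eta) (seq_rho rho) /\
     p_L (seq_eta eta) (seq_rho rho) = \prod_(l < L) p_L (eta l) (rho l)).
Proof.
move=> m_ge2 _ _ ens; pose k0 : 'I_m := Ordinal (ltnW m_ge2).
have eta_x_gt0 : 0 < seq_eta eta x by apply: prodr_gt0 => l _; exact: (ens l).1.
have tr_l l : \tr (rho l (x l)) = 1 by exact: ((ens l).2.2 (x l)).2.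
have tr_x : \tr (seq_rho rho x) = 1.
  by rewrite seq_rhoE mxtrace_copies_op big1.
have herm_seq c : Defs.hermitian (seq_rho rho c).
  by rewrite seq_rhoE; apply: hermitian_copies_op => l; exact: ((ens l).2.2 (c l)).1.1.
have necessity := sep_dual_gap_of_p_L_eq eta_x_gt0 tr_x herm_seq.
split; first by split; [exact: necessity | exact: p_L_eq_of_sep_dual_gap k0 tr_x].
move=> pL_x; have sd_gap := necessity pL_x.
split; first by rewrite pL_x (p_SEP_eq_of_sep_dual_gap k0 tr_x sd_gap).
rewrite pL_x; apply: eq_bigr => l _.
by rewrite (p_L_eq_of_sep_dual_gap k0 (tr_l l) (sep_dual_gap_copy k0 ens sd_gap (l:=l))).
Qed.
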